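(* Let $\Gamma$ be a metrized graph with $v \geq 4$ vertices. Then $$(v-4)\,Kf(\Gamma)=\sum_{e_i \in E(\Gamma)} \frac{R_i}{L_i+R_i}\, Kf(\overline{\Gamma}_i) - v\cdot y(\Gamma).$$
   Context: A metrized graph $\Gamma$ is a finite connected graph (multiple edges and self-loops allowed) each of whose edges is identified with a closed segment of positive length. Its vertex set $V(\Gamma)$ is a finite nonempty set of points containing every point whose valence (number of directions emanating from it) is not $2$; $v=\#V(\Gamma)$; $E(\Gamma)$ is the set of edges (closed segments between vertices), and $L_i$ is the length of the edge $e_i$. $r(x,y)$ is the effective resistance on $\Gamma$ (each edge a resistor with resistance equal to its length), and $r_\beta$ is the resistance function on a metrized graph $\beta$. For an edge $e_i$ with end points $p_i,q_i$, $\Gamma-e_i$ is the graph with the interior of $e_i$ deleted. If $\Gamma-e_i$ is connected, $R_i$ is the effective resistance between $p_i$ and $q_i$ in $\Gamma-e_i$, and for a point $p$, $R_{a_i,p}=\hat j_{p_i}(p,q_i)$ and $R_{b_i,p}=\hat j_{q_i}(p,p_i)$, where $\hat j_z(x,y)$ is the voltage function of $\Gamma-e_i$ (the potential at $x$ when unit current enters at $y$ and exits at $z$, with potential $0$ at $z$); thus $R_{a_i,p}+R_{b_i,p}=R_i$. If $e_i$ is a bridge, one sets $R_{a_i,p}=0,\ R_{b_i,p}=R_i$ when $p$ lies in the component of $\Gamma-e_i$ containing $p_i$, and $R_{a_i,p}=R_i,\ R_{b_i,p}=0$ otherwise, and every expression involving $R_i$ is interpreted as its limit as $R_i\to\infty$.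 For a self-loop, $R_i=0$. The Kirchhoff index is $Kf(\Gamma)=\frac12\sum_{p,q\in V(\Gamma)} r(p,q)$. $\overline{\Gamma}_i$ is the metrized graph obtained by contracting $e_i$ to a point (identifying $p_i$ and $q_i$), with vertex set the image of $V(\Gamma)$; the quantities for $\overline\Gamma_i$ are computed in $\overline\Gamma_i$. For a fixed vertex $p$ (the value is independent of the choice), $$y(\Gamma)=\frac14\sum_{e_i\in E(\Gamma)}\frac{L_iR_i^2}{(L_i+R_i)^2}+\frac34\sum_{e_i\in E(\Gamma)}\frac{L_i(R_{a_i,p}-R_{b_i,p})^2}{(L_i+R_i)^2}.$$ *)

(* Metrized graphs modelled as finite weighted multigraphs
   (vertex finType V, edge finType E, endpoint maps pt qt, lengths L). *)
From mathcomp Require Import all_boot all_order all_algebra.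
Set Implicit Arguments. Unset Strict Implicit. Unset Printing Implicit Defensive.
Import Order.TTheory GRing.Theory Num.Theory.
Local Open Scope ring_scope.

Section Metrized.
Variable R : realFieldType.

Section Graph.
Variables (V E : finType) (pt qt : E -> V) (L : E -> R).

Definition adj : rel V := fun x y =>
  [exists e, ((pt e == x) && (qt e == y)) || ((pt e == y) && (qt e == x))].
Definition connected_graph : bool := [forall x, [forall y, connect adj x y]].

Definition ind (v : V) (a : 'I_#|V|) : R := ((enum_val a) == v)%:R.

(* weighted Laplacian: each edge is a resistor of resistance L e
   (conductance (L e)^-1); self-loops contribute nothing *)
Definition laplacian : 'M[R]_#|V| :=
  \matrix_(a, b) \sum_(e : E)
     (L e)^-1 * (ind (pt e) a - ind (qt e) a) * (ind (pt e) b - ind (qt e) b).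

Definition grounded_laplacian (z : V) : 'M[R]_#|V| :=
  laplacian + delta_mx (enum_rank z) (enum_rank z).

(* voltage function j_z(x,y): potential at x when unit current enters at y
   and exits at z, potential 0 at z.  It is the unique f with
   laplacian f = e_y - e_z and f z = 0, i.e. grounded_laplacian z f = e_y - e_z. *)
Definition voltage (z x y : V) : R :=
  (invmx (grounded_laplacian z) *m \col_a (ind y a - ind z a)) (enum_rank x) ord0.

Definition resistance (x y : V) : R := voltage y x x.

Definition kirchhoff_index : R :=
  2^-1 * \sum_(x : V) \sum_(y : V) resistance x y.

End Graph.

Section Derived.
Variables (V E : finType) (pt qt : E -> V) (L : E -> R).

Definition del_pt (i : E) (e : {e : E | e != i}) : V := pt (val e).
Definition del_qt (i : E) (e : {e : E | e != i}) : V := qt (val e).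
Definition del_L (i : E) (e : {e : E | e != i}) : R := L (val e).

Definition is_bridge (i : E) : bool :=
  ~~ connected_graph (@del_pt i) (@del_qt i).

Definition Rdel (i : E) : R :=
  resistance (@del_pt i) (@del_qt i) (@del_L i) (pt i) (qt i).
Definition Ra (i : E) (w : V) : R :=
  voltage (@del_pt i) (@del_qt i) (@del_L i) (pt i) w (qt i).
Definition Rb (i : E) (w : V) : R :=
  voltage (@del_pt i) (@del_qt i) (@del_L i) (qt i) w (pt i).

(* contraction of edge i: q_i is identified with p_i; vertex set is the image
   of V, represented as V minus q_i (or all of V if e_i is a self-loop) *)
Definition cproj (i : E) (x : V) : V := if x == qt i then pt i else x.
Definition cV (i : E) := {x : V | (x != qt i) || (pt i == qt i)}.
Lemma cproj_ok (i : E) (x : V) : (cproj i x != qt i) || (pt i == qt i).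
Proof.
rewrite /cproj; case: ifP => [_|/negbT ->] //; exact: orNb.
Qed.
Definition cmap (i : E) (x : V) : cV i := exist _ (cproj i x) (cproj_ok i x).
Definition con_pt (i : E) (e : {e : E | e != i}) : cV i := cmap i (pt (val e)).
Definition con_qt (i : E) (e : {e : E | e != i}) : cV i := cmap i (qt (val e)).

Definition Kf_contract (i : E) : R :=
  kirchhoff_index (@con_pt i) (@con_qt i) (@del_L i).

(* coefficient R_i/(L_i+R_i); for a bridge, its limit as R_i -> oo, i.e. 1 *)
Definition coef (i : E) : R :=
  if is_bridge i then 1 else Rdel i / (L i + Rdel i).

(* summands of y; for a bridge, their limits as R_i -> oo (both equal L_i) *)
Definition yterm1 (i : E) : R :=
  if is_bridge i then L i else L i * (Rdel i) ^+ 2 / (L i + Rdel i) ^+ 2.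
Definition yterm2 (i : E) (w : V) : R :=
  if is_bridge i then L i
  else L i * (Ra i w - Rb i w) ^+ 2 / (L i + Rdel i) ^+ 2.

Definition ygamma (w : V) : R :=
  4^-1 * \sum_(i : E) yterm1 i + 3 / 4 * \sum_(i : E) yterm2 i w.

End Derived.
End Metrized.

From mathcomp Require Import all_boot all_order all_algebra.
From mathcomp Require Import ring.
Set Implicit Arguments. Unset Strict Implicit. Unset Printing Implicit Defensive.
Import Order.TTheory GRing.Theory Num.Theory.
Local Open Scope ring_scope.

(* Everything is expressed through the normalized Green function [M] of the
   Laplacian: [M] is symmetric, has zero row sums and [lap M(., y) = delta_y - 1/n].
   Then [r(x, y) = M(x,x) - 2 M(x,y) + M(y,y)] and [Kf = n tr M].  For an edge
   [e_i = [p_i, q_i]] let [psi_i = M(., p_i) - M(., q_i)] and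
   [rho_i = psi_i(p_i) - psi_i(q_i)], the resistance between [p_i] and [q_i].
   Since [Gamma] is [Gamma - e_i] in parallel with [e_i], [R_i / (L_i + R_i)]
   equals [rho_i / L_i], and both summands of [y(Gamma)] become quadratic
   expressions in [psi_i]; the Green function of the contracted graph is the
   rank-one update [M - psi_i psi_i^T / rho_i], so [Kf(contract e_i)] is one
   as well.  Summing over the edges, Foster-type identities
   [sum_i (f(p_i) - f(q_i)) psi_i(x) / L_i = f(x) - mean f] turn the right-hand
   side into [n (n - 4) tr M]. *)

Section Laplacian.
Variable R : realFieldType.
Variables (V E : finType) (pt qt : E -> V) (L : E -> R).

Definition kron (x y : V) : R := (x == y)%:R.

Definition lap (f : V -> R) (x : V) : R :=
  \sum_(e : E) (L e)^-1 * (kron x (pt e) - kron x (qt e)) * (f (pt e) - f (qt e)).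

Definition dirichlet (f g : V -> R) : R :=
  \sum_(e : E) (L e)^-1 * (f (pt e) - f (qt e)) * (g (pt e) - g (qt e)).

Definition potential_kernel (N : V -> V -> R) : Prop :=
  forall x y z, lap (fun u => N u y - N u z) x = kron x y - kron x z.

Lemma kronC x y : kron x y = kron y x.
Proof. by rewrite /kron eq_sym. Qed.

Lemma sum_kronr (f : V -> R) y : \sum_x f x * kron x y = f y.
Proof.
rewrite (bigD1 y) //= /kron eqxx mulr1 big1 ?addr0 // => x /negbTE ->.
by rewrite mulr0.
Qed.

Lemma sum_kronl (f : V -> R) y : \sum_x kron y x * f x = f y.
Proof.
by rewrite -[RHS](sum_kronr f y); apply: eq_bigr => x _; rewrite kronC mulrC.
Qed.

Lemma sum_kron_row x : \sum_y kron x y = 1.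
Proof.
by rewrite -[RHS](sum_kronl (fun _ => 1) x); apply: eq_bigr => y _; rewrite mulr1.
Qed.

Lemma sum_kron_col y : \sum_x kron x y = 1.
Proof. by under eq_bigr do rewrite kronC; apply: sum_kron_row. Qed.

Lemma sum_kronB (f : V -> R) a b : \sum_y f y * (kron y a - kron y b) = f a - f b.
Proof. by under eq_bigr do rewrite mulrBr; rewrite sumrB !sum_kronr. Qed.

Lemma dirichlet_lap f g : dirichlet f g = \sum_x f x * lap g x.
Proof.
rewrite /dirichlet /lap.
under [RHS]eq_bigr do rewrite mulr_sumr.
rewrite exchange_big /=; apply: eq_bigr => e _.
rewrite -(sum_kronB f) mulr_sumr mulr_suml.
by apply: eq_bigr => x _; ring.
Qed.

Lemma dirichletC f g : dirichlet f g = dirichlet g f.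
Proof. by apply: eq_bigr => e _; ring. Qed.

Lemma sum_lap g : \sum_x lap g x = 0.
Proof.
have := dirichlet_lap (fun _ => 1) g; under eq_bigr do rewrite mul1r.
by move=> <-; apply: big1 => e _; ring.
Qed.

Lemma eq_lap f g x :
  (forall e, f (pt e) - f (qt e) = g (pt e) - g (qt e)) -> lap f x = lap g x.
Proof. by move=> fg; apply: eq_bigr => e _; rewrite fg. Qed.

Lemma lapBZ f g k x : lap (fun u => f u - k * g u) x = lap f x - k * lap g x.
Proof. rewrite /lap mulr_sumr -sumrB; apply: eq_bigr => e _; ring. Qed.

Lemma lapB f g x : lap (fun u => f u - g u) x = lap f x - lap g x.
Proof. rewrite /lap -sumrB; apply: eq_bigr => e _; ring. Qed.

Lemma lap_sum (h : V -> V -> R) x :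
  lap (fun u => \sum_v h u v) x = \sum_v lap (h^~ v) x.
Proof.
rewrite /lap exchange_big; apply: eq_bigr => e _ /=.
by rewrite -mulr_sumr sumrB.
Qed.

Hypothesis L_gt0 : forall e, 0 < L e.

Lemma dirichlet_ge0 f : 0 <= dirichlet f f.
Proof.
apply: sumr_ge0 => e _; rewrite -mulrA -expr2.
by rewrite mulr_ge0 ?sqr_ge0 // invr_ge0 ltW.
Qed.

Lemma dirichlet_eq0 f :
  dirichlet f f = 0 -> forall e, f (pt e) = f (qt e).
Proof.
have term_ge0 e : 0 <= (L e)^-1 * (f (pt e) - f (qt e)) * (f (pt e) - f (qt e)).
  by rewrite -mulrA -expr2 mulr_ge0 ?sqr_ge0 // invr_ge0 ltW.
move=> /(psumr_eq0P (fun e _ => term_ge0 e)) f0 e.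
move/eqP: (f0 e isT); rewrite -mulrA -expr2 mulf_eq0 invr_eq0 gt_eqF //=.
by rewrite sqrf_eq0 subr_eq0 => /eqP.
Qed.

Lemma connected_edge_const (f : V -> R) :
  connected_graph pt qt -> (forall e, f (pt e) = f (qt e)) ->
  forall x y, f x = f y.
Proof.
move=> /forallP conn fe x y.
have /connectP [s path_s ->] := forallP (conn x) y.
elim: s x path_s => [|u s IHs] x //= /andP [/existsP [e exy] path_s].
rewrite -(IHs u path_s).
by case/orP: exy => /andP [/eqP <- /eqP <-].
Qed.

End Laplacian.
Arguments kron {R V} x y.

Section GroundedLaplacian.
Variable R : realFieldType.
Variables (V E : finType) (pt qt : E -> V) (L : E -> R).

Local Notation lap := (lap pt qt L).
Local Notation A := (grounded_laplacian pt qt L).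

Lemma sum_indB (g : 'I_#|V| -> R) p q :
  \sum_j (ind R p j - ind R q j) * g j = g (enum_rank p) - g (enum_rank q).
Proof.
have sum_ind v : \sum_j ind R v j * g j = g (enum_rank v).
  rewrite (bigD1 (enum_rank v)) //= /ind enum_rankK eqxx mul1r big1 ?addr0 //.
  by move=> j /negbTE; rewrite -(inj_eq enum_val_inj) enum_rankK => ->; rewrite mul0r.
by under eq_bigr do rewrite mulrBl; rewrite sumrB !sum_ind.
Qed.

Lemma grounded_laplacianM z m (X : 'M[R]_(#|V|, m)) x b :
  (A z *m X) (enum_rank x) b =
  lap (fun u => X (enum_rank u) b) x + kron x z * X (enum_rank z) b.
Proof.
rewrite !mxE; under eq_bigr do rewrite !mxE mulrDl.
rewrite big_split /=; congr (_ + _).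
  under eq_bigr do rewrite mulr_suml.
  rewrite exchange_big; apply: eq_bigr => e _ /=.
  rewrite -(sum_indB (fun j => X j b)) mulr_sumr /ind enum_rankK.
  by apply: eq_bigr => j _; ring.
rewrite (bigD1 (enum_rank z)) //= big1 => [|j /negbTE ->]; last first.
  by rewrite andbF mul0r.
by rewrite eqxx andbT (inj_eq enum_rank_inj) addr0.
Qed.

Lemma tr_grounded_laplacian z : (A z)^T = A z.
Proof.
apply/matrixP => a b; rewrite !mxE andbC; congr (_ + _).
by apply: eq_bigr => e _; ring.
Qed.

Section PotentialKernel.
Variables (N : V -> V -> R) (N_ker : potential_kernel pt qt L N).

Lemma voltageE z x y : voltage pt qt L z x y = N x y - N x z - N z y + N z z.
Proof.
pose G u v := N u v - N u z - N z v + N z z + 1.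
pose X : 'M[R]_#|V| := \matrix_(a, b) G (enum_val a) (enum_val b).
have AX : A z *m X = 1%:M.
  apply/matrixP => a b; rewrite -[a]enum_valK -[b]enum_valK.
  set x' := enum_val a; set y' := enum_val b.
  rewrite grounded_laplacianM !mxE !enum_rankK (inj_eq enum_rank_inj).
  rewrite (@eq_lap _ _ _ _ _ _ _ (fun u => N u y' - N u z)) => [|e]; last first.
    by rewrite !mxE !enum_rankK /G; ring.
  by rewrite N_ker /G /kron; ring.
have iA : invmx (A z) = X.
  have [A_unit _] := mulmx1_unit AX.
  by rewrite -[RHS](mulKmx A_unit) AX mulmx1.
rewrite /voltage iA !mxE; under eq_bigr do rewrite !mxE mulrC.
by rewrite sum_indB /G !enum_rankK; ring.
Qed.

Lemma resistanceE x y : resistance pt qt L x y = N x x - N x y - N y x + N y y.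
Proof. by rewrite /resistance voltageE; ring. Qed.

Lemma kirchhoff_indexE :
  kirchhoff_index pt qt L = #|V|%:R * \sum_x N x x - \sum_x \sum_y N x y.
Proof.
rewrite /kirchhoff_index.
under eq_bigr do under eq_bigr do rewrite resistanceE.
under eq_bigr do rewrite big_split /= !sumrB sumr_const.
rewrite big_split /= !sumrB [X in _ - X + _]exchange_big /= sumr_const.
rewrite sumrMnl (_ : #|_| = #|V|) // -[(\sum_i N i i) *+ #|V|]mulr_natl.
have two_neq0 : (2 : R) != 0 by rewrite pnatr_eq0.
by field.
Qed.

End PotentialKernel.

Hypotheses (L_gt0 : forall e, 0 < L e) (conn : connected_graph pt qt).

Lemma grounded_laplacian_unit z : A z \in unitmx.
Proof.
rewrite unitmxE unitfE; apply/negP => /det0P [v v_neq0 vA].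
pose f x := v^T (enum_rank x) 0.
have Av : A z *m v^T = 0 by rewrite -tr_grounded_laplacian -trmx_mul vA trmx0.
have lap_f x : lap f x = - (kron x z * f z).
  by apply/eqP; rewrite -addr_eq0 -grounded_laplacianM Av mxE.
have energy : dirichlet pt qt L f f + f z ^+ 2 = 0.
  rewrite dirichlet_lap; under eq_bigr do rewrite lap_f mulrN mulrA.
  by rewrite sumrN -mulr_suml sum_kronr expr2 addNr.
move/eqP: energy; rewrite paddr_eq0 ?dirichlet_ge0 ?sqr_ge0 //.
move=> /andP [/eqP /(dirichlet_eq0 L_gt0) f_edge]; rewrite sqrf_eq0 => /eqP fz.
case/eqP: v_neq0; apply/rowP => a.
have := connected_edge_const conn f_edge (enum_val a) z.
by rewrite fz /f enum_valK !mxE.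
Qed.

Lemma potential_kernel_exists z :
  exists G : V -> V -> R, (forall x y, G x y = G y x) /\
    forall x y, lap (fun u => G u y) x = kron x y - kron x z.
Proof.
set Ai := invmx (A z).
pose G x y := Ai (enum_rank x) (enum_rank y).
have AAi : A z *m Ai = 1%:M by apply: mulmxV; apply: grounded_laplacian_unit.
have Ai_sym a b : Ai a b = Ai b a.
  have trAi : Ai^T = Ai by rewrite /Ai trmx_inv tr_grounded_laplacian.
  by rewrite -[in LHS]trAi mxE.
have lap_G x y : lap (fun u => G u y) x + kron x z * G z y = kron x y.
  move/matrixP: AAi => /(_ (enum_rank x) (enum_rank y)).
  by rewrite grounded_laplacianM mxE (inj_eq enum_rank_inj).
have Gz y : G z y = 1.
  have : \sum_x (lap (fun u => G u y) x + kron x z * G z y) = \sum_x kron x y.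
    by apply: eq_bigr => x _; apply: lap_G.
  by rewrite big_split /= sum_lap add0r -mulr_suml !sum_kron_col mul1r.
exists G; split=> [x y|x y]; first exact: Ai_sym.
by rewrite -(lap_G x y) Gz mulr1 addrK.
Qed.

Lemma green_exists (z : V) :
  exists M : V -> V -> R, [/\ forall x y, M x y = M y x,
    forall x, \sum_y M x y = 0 &
    forall x y, lap (fun u => M u y) x = kron x y - #|V|%:R^-1].
Proof.
have [G [G_sym lap_G]] := potential_kernel_exists z.
have n_neq0 : (#|V|%:R : R) != 0.
  by rewrite pnatr_eq0 -lt0n; apply/card_gt0P; exists z.
set n := (#|V|%:R : R) in n_neq0 *.
have [row row_def] : {row : V -> R | forall x, \sum_v G x v = row x}.
  by exists (fun x => \sum_v G x v).
have [tot tot_def] : {tot : R | \sum_u row u = tot} by exists (\sum_u row u).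
have sum_const c : \sum_(x : V) c = n * c.
  by rewrite sumr_const (_ : #|_| = #|V|) // -mulr_natl.
exists (fun x y => G x y - n^-1 * row y - n^-1 * row x + n^-1 * n^-1 * tot).
split=> [x y|x|x y].
- by rewrite G_sym; ring.
- rewrite big_split /= !sumrB -mulr_sumr row_def tot_def !sum_const.
  by field.
- rewrite (@eq_lap _ _ _ _ _ _ _ (fun u => G u y - n^-1 * row u)) => [|e]; last first.
    by ring.
  rewrite lapBZ lap_G (@eq_lap _ _ _ _ _ _ _ (fun u => \sum_v G u v)) => [|e]; last first.
    by rewrite !row_def.
  rewrite lap_sum; under eq_bigr do rewrite lap_G.
  rewrite sumrB sum_kron_row sum_const.
  by field.
Qed.

End GroundedLaplacian.

Lemma sum_sig (R : nmodType) (T : finType) (P : pred T) (F : T -> R) :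
  \sum_(x : {x | P x}) F (val x) = \sum_(x | P x) F x.
Proof.
rewrite [RHS](reindex_omap (val : {x | P x} -> T) insub); last first.
  by move=> x Px; rewrite insubT.
apply: eq_bigl => -[x Px] /=; rewrite Px insubT /=.
by apply/esym/eqP; congr Some; apply: val_inj.
Qed.

Section DeletionContraction.
Variable R : realFieldType.
Variables (V E : finType) (pt qt : E -> V) (L : E -> R) (i : E).

Local Notation lap_del := (lap (@del_pt _ _ pt i) (@del_qt _ _ qt i) (@del_L _ _ L i)).
Local Notation lap_con :=
  (lap (@con_pt _ _ pt qt i) (@con_qt _ _ pt qt i) (@del_L _ _ L i)).

Lemma lap_del_edge f x :
  lap pt qt L f x =
  lap_del f x + (L i)^-1 * (kron x (pt i) - kron x (qt i)) * (f (pt i) - f (qt i)).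
Proof.
rewrite /lap (bigD1 i) //= addrC; congr (_ + _); symmetry.
exact: (sum_sig (fun e => e != i)
  (fun e => (L e)^-1 * (kron x (pt e) - kron x (qt e)) * (f (pt e) - f (qt e)))).
Qed.

Hypothesis pq_neq : pt i != qt i.

Lemma contract_neq_qt (a : cV pt qt i) : val a != qt i.
Proof. by case/orP: (valP a) => // pq_eq; case/negP: pq_neq. Qed.

Lemma sum_contract (F : V -> R) :
  \sum_(a : cV pt qt i) F (val a) = \sum_x F x - F (qt i).
Proof.
rewrite (sum_sig (fun x => (x != qt i) || (pt i == qt i)) F).
rewrite [\sum_x F x](bigD1 (qt i)) //= addrC addrK.
by apply: eq_bigl => x; rewrite (negbTE pq_neq) orbF.
Qed.

Lemma card_contract : #|{: cV pt qt i}| = #|V|.-1.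
Proof.
rewrite card_sig -(cardC1 (qt i)); apply: eq_card => x.
by rewrite !inE (negbTE pq_neq) orbF.
Qed.

(* At the merged vertex [p_i] the currents leaving [p_i] and [q_i] in
   [Gamma - e_i] add up. *)
Lemma lap_contract f (fpq : f (pt i) = f (qt i)) a :
  lap_con (fun b => f (val b)) a =
  lap_del f (val a) + kron (val a) (pt i) * lap_del f (qt i).
Proof.
have kron_cmap u :
    kron a (cmap pt qt i u) = kron (val a) u + kron (val a) (pt i) * kron (qt i) u.
  rewrite /kron (_ : (a == cmap pt qt i u) = (val a == cproj pt qt i u)) // /cproj.
  case: (eqVneq u (qt i)) => [-> | _]; last by rewrite mulr0 addr0.
  by rewrite (negbTE (contract_neq_qt a)) add0r mulr1.
have f_cmap u : f (val (cmap pt qt i u)) = f u.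
  by rewrite /= /cproj; case: eqP => [-> | _].
rewrite /lap mulr_sumr -big_split /=; apply: eq_bigr => e _.
by rewrite /con_pt /con_qt !kron_cmap !f_cmap /del_pt /del_qt; ring.
Qed.

End DeletionContraction.

Section Bridges.
Variable R : realFieldType.
Variables (V E : finType) (pt qt : E -> V) (L : E -> R) (i : E).

Lemma bridge_separation :
  connected_graph pt qt -> is_bridge pt qt i ->
  exists S : pred V, [/\ S (pt i), ~~ S (qt i) &
    forall e : {e | e != i}, S (pt (val e)) = S (qt (val e))].
Proof.
move=> conn bridge.
set adj' := adj (@del_pt _ _ pt i) (@del_qt _ _ qt i).
have adj'C : symmetric adj'.
  by move=> x y; apply/existsP/existsP => -[e he]; exists e; rewrite orbC.
have adj'_edge (e : {e | e != i}) : adj' (pt (val e)) (qt (val e)).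
  by apply/existsP; exists e; rewrite /del_pt /del_qt !eqxx.
have disconnected_pq : ~~ connect adj' (pt i) (qt i).
  apply: contra bridge => conn_pq; apply/forallP => x; apply/forallP => y.
  apply: connect_sub (forallP (forallP conn x) y) => u v /existsP [e he].
  case: (eqVneq e i) => [ei | ne]; last first.
    by apply: connect1; apply/existsP; exists (exist _ e ne).
  move: he; rewrite ei => /orP [] /andP [/eqP <- /eqP <-] //.
  by rewrite (sym_connect_sym adj'C).
exists (connect adj' (pt i)); split=> // e.
apply/idP/idP => conn_e; apply: connect_trans conn_e (connect1 _).
  exact: adj'_edge.
by rewrite adj'C adj'_edge.
Qed.

Lemma nonbridge_voltages :
  (forall e, 0 < L e) -> ~~ is_bridge pt qt i ->
  exists phi : V -> R, [/\
    forall x, lap (@del_pt _ _ pt i) (@del_qt _ _ qt i) (@del_L _ _ L i) phi x =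
      kron x (pt i) - kron x (qt i),
    Rdel pt qt L i = phi (pt i) - phi (qt i),
    forall w, Ra pt qt L i w = phi (pt i) - phi w &
    forall w, Rb pt qt L i w = phi w - phi (qt i)].
Proof.
move=> L_gt0; rewrite negbK => conn_del.
have [N [_ _ lap_N]] := green_exists (fun e => L_gt0 (val e)) conn_del (pt i).
have N_ker : potential_kernel (@del_pt _ _ pt i) (@del_qt _ _ qt i) (@del_L _ _ L i) N.
  by move=> x y z; rewrite lapB !lap_N; ring.
exists (fun u => N u (pt i) - N u (qt i)); split.
- by move=> x; apply: N_ker.
- by rewrite /Rdel (resistanceE N_ker); ring.
- by move=> w; rewrite /Ra (voltageE N_ker); ring.
- by move=> w; rewrite /Rb (voltageE N_ker); ring.
Qed.

End Bridges.

Section GreenFunction.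
Variable R : realFieldType.
Variables (V E : finType) (pt qt : E -> V) (L : E -> R).
Hypotheses (L_gt0 : forall e, 0 < L e) (conn : connected_graph pt qt).
Local Notation n := (#|V|%:R : R).
Hypothesis n_neq0 : n != 0.

Variable M : V -> V -> R.
Hypotheses (M_sym : forall x y, M x y = M y x) (M_row : forall x, \sum_y M x y = 0).
Hypothesis lap_M : forall x y, lap pt qt L (M^~ y) x = kron x y - n^-1.

Lemma M_col y : \sum_x M x y = 0.
Proof. by under eq_bigr do rewrite M_sym; apply: M_row. Qed.

Lemma green_potential_kernel : potential_kernel pt qt L M.
Proof. by move=> x y z; rewrite lapB !lap_M; ring. Qed.

Lemma kirchhoff_index_green : kirchhoff_index pt qt L = n * \sum_x M x x.
Proof.
rewrite (kirchhoff_indexE green_potential_kernel).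
by under [X in _ - X]eq_bigr do rewrite M_row; rewrite big1_eq subr0.
Qed.

Lemma dirichlet_green f y : dirichlet pt qt L f (M^~ y) = f y - n^-1 * \sum_x f x.
Proof.
rewrite dirichlet_lap; under eq_bigr do rewrite lap_M mulrBr.
by rewrite sumrB sum_kronr -mulr_suml mulrC.
Qed.

Lemma harmonic_const f : (forall x, lap pt qt L f x = 0) -> forall u v, f u = f v.
Proof.
move=> f_harm u v.
have f_mean y : f y = n^-1 * \sum_x f x.
  apply/eqP; rewrite -subr_eq0 -dirichlet_green dirichletC dirichlet_lap.
  by rewrite big1 // => x _; rewrite f_harm mulr0.
by rewrite !f_mean.
Qed.

Lemma harmonicBZ f g k :
  (forall x, lap pt qt L (fun u => f u - k * g u) x = 0) ->
  forall u v, f u - f v = k * (g u - g v).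
Proof.
move=> harm u v; apply/eqP; rewrite -subr_eq0.
have -> : f u - f v - k * (g u - g v) = (f u - k * g u) - (f v - k * g v) by ring.
by rewrite (harmonic_const harm u v) subrr.
Qed.

(* [psi i] is the potential of a unit current from [p_i] to [q_i] and
   [rho i] the effective resistance between them in [Gamma]. *)
Definition psi (i : E) (x : V) : R := M x (pt i) - M x (qt i).
Definition rho (i : E) : R := psi i (pt i) - psi i (qt i).

Lemma lap_psi i x : lap pt qt L (psi i) x = kron x (pt i) - kron x (qt i).
Proof. exact: green_potential_kernel. Qed.

Lemma sum_psi i : \sum_y psi i y = 0.
Proof. by rewrite /psi sumrB !M_col subrr. Qed.

Lemma dirichlet_psi i : dirichlet pt qt L (psi i) (psi i) = rho i.
Proof. by rewrite dirichlet_lap; under eq_bigr do rewrite lap_psi; rewrite sum_kronB. Qed.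

Lemma rho_neq0 i : pt i != qt i -> rho i != 0.
Proof.
move=> pq_neq; apply/eqP => rho0.
have /(dirichlet_eq0 L_gt0) psi_edge := etrans (dirichlet_psi i) rho0.
have lap0 : lap pt qt L (psi i) (pt i) = 0.
  by apply: big1 => e _; rewrite psi_edge subrr mulr0.
move: (lap_psi i (pt i)); rewrite lap0 /kron eqxx (negbTE pq_neq) subr0.
by move/eqP; rewrite eq_sym oner_eq0.
Qed.

Lemma sum_edges_psi_weighted (w : V -> R) :
  \sum_i (L i)^-1 * (w (pt i) * psi i (pt i) - w (qt i) * psi i (qt i)) =
  (1 - n^-1) * \sum_y w y.
Proof.
transitivity (\sum_y w y * lap pt qt L (M^~ y) y); last first.
  by under eq_bigr do rewrite lap_M /kron eqxx; rewrite -mulr_suml mulrC.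
under [RHS]eq_bigr do rewrite mulr_sumr.
rewrite exchange_big /=; apply: eq_bigr => i _.
transitivity (\sum_y (L i)^-1 * w y * (M (pt i) y - M (qt i) y) *
                      (kron y (pt i) - kron y (qt i))).
  by rewrite sum_kronB /psi (M_sym (qt i) (pt i)); ring.
by apply: eq_bigr => y _; ring.
Qed.

Lemma foster : \sum_i (L i)^-1 * rho i = n - 1.
Proof.
have := sum_edges_psi_weighted (fun _ => 1).
under eq_bigr do rewrite !mul1r; move=> ->.
by rewrite sumr_const (_ : #|_| = #|V|) //; field.
Qed.

Lemma sum_edges_psi_sqr w : \sum_i (L i)^-1 * psi i w ^+ 2 = M w w.
Proof.
have := dirichlet_green (M^~ w) w; rewrite M_col mulr0 subr0 => <-.
by apply: eq_bigr => i _; rewrite /psi !(M_sym w); ring.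
Qed.

Lemma sum_edges_psi_mid w :
  \sum_i (L i)^-1 * (psi i (pt i) + psi i (qt i)) * psi i w =
  M w w - n^-1 * \sum_x M x x.
Proof.
rewrite -(dirichlet_green (fun u => M u u) w).
by apply: eq_bigr => i _; rewrite /psi !(M_sym w) (M_sym (pt i) (qt i)); ring.
Qed.

Section Bridge.
Variable i : E.
Hypothesis bridge : is_bridge pt qt i.

Lemma psiB_bridge : exists S : pred V, [/\ S (pt i), ~~ S (qt i) &
  forall u v, psi i u - psi i v = L i * ((S u)%:R - (S v)%:R)].
Proof.
have [S [Sp Sq S_edge]] := bridge_separation conn bridge.
pose chi x : R := (S x)%:R.
have lap_chi x : lap pt qt L chi x = (L i)^-1 * (kron x (pt i) - kron x (qt i)).
  rewrite (lap_del_edge _ _ _ i) /chi Sp (negbTE Sq) subr0 mulr1 /lap.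
  by rewrite big1 ?add0r // => e _; rewrite /del_pt /del_qt S_edge subrr mulr0.
have harm : forall x, lap pt qt L (fun u => psi i u - L i * chi u) x = 0.
  by move=> x; rewrite lapBZ lap_chi lap_psi mulrA divff ?mul1r ?subrr ?gt_eqF.
by exists S; split=> //; apply: harmonicBZ.
Qed.

Lemma rho_bridge : rho i = L i.
Proof.
have [S [Sp Sq psiB]] := psiB_bridge.
by rewrite /rho psiB Sp (negbTE Sq) subr0 mulr1.
Qed.

Lemma psi_mid_bridge w : (psi i (pt i) + psi i (qt i) - 2 * psi i w) ^+ 2 = L i ^+ 2.
Proof.
have [S [Sp Sq psiB]] := psiB_bridge.
have -> : psi i (pt i) + psi i (qt i) - 2 * psi i w =
    (psi i (pt i) - psi i w) + (psi i (qt i) - psi i w) by ring.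
by rewrite !psiB Sp (negbTE Sq); case: (S w) => /=; ring.
Qed.

End Bridge.

Section NonBridge.
Variable i : E.
Hypothesis nonbridge : ~~ is_bridge pt qt i.
Local Notation Rd := (Rdel pt qt L i).

(* [Gamma] is [Gamma - e_i] in parallel with [e_i]: the unit potential [phi]
   of [Gamma - e_i] drives the total current [1 + Rd / L i] from [p_i] to [q_i]
   through [Gamma], so it is that multiple of [psi i] up to a constant. *)
Lemma nonbridge_potential : exists phi : V -> R, [/\
  Rd = phi (pt i) - phi (qt i),
  forall w, Ra pt qt L i w = phi (pt i) - phi w,
  forall w, Rb pt qt L i w = phi w - phi (qt i),
  0 <= Rd &
  forall u v, phi u - phi v = (1 + (L i)^-1 * Rd) * (psi i u - psi i v)].
Proof.
have [phi [lap_phi Rd_phi Ra_phi Rb_phi]] := nonbridge_voltages L_gt0 nonbridge.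
have Rd_ge0 : 0 <= Rd.
  rewrite Rd_phi -(sum_kronB phi); under eq_bigr do rewrite -lap_phi.
  by rewrite -dirichlet_lap; apply: dirichlet_ge0 => e; apply: L_gt0.
set k := 1 + (L i)^-1 * Rd.
have harm x : lap pt qt L (fun u => phi u - k * psi i u) x = 0.
  by rewrite lapBZ (lap_del_edge _ _ _ i) lap_phi lap_psi -Rd_phi /k; ring.
by exists phi; split=> //; apply: harmonicBZ.
Qed.

Lemma nonbridge_terms : [/\
  coef pt qt L i = (L i)^-1 * rho i,
  yterm1 pt qt L i = (L i)^-1 * rho i ^+ 2 &
  forall w, yterm2 pt qt L i w =
    (L i)^-1 * (psi i (pt i) + psi i (qt i) - 2 * psi i w) ^+ 2].
Proof.
have [phi [Rd_phi Ra_phi Rb_phi Rd_ge0 phiB]] := nonbridge_potential.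
set k := 1 + (L i)^-1 * Rd in phiB.
have Li_neq0 : L i != 0 by rewrite gt_eqF.
have k_neq0 : k != 0.
  by rewrite gt_eqF // ltr_pwDl // mulr_ge0 // invr_ge0 ltW.
have LRd : L i + Rd = L i * k by rewrite /k; field.
have Rd_rho : Rd = k * rho i by rewrite Rd_phi phiB.
rewrite /coef /yterm1 /yterm2 (negbTE nonbridge) LRd Rd_rho; split.
- by field; rewrite Li_neq0 k_neq0.
- by field; rewrite Li_neq0 k_neq0.
move=> w; rewrite Ra_phi Rb_phi.
have -> : phi (pt i) - phi w - (phi w - phi (qt i)) =
    (phi (pt i) - phi w) + (phi (qt i) - phi w) by ring.
by rewrite !phiB; field; rewrite Li_neq0 k_neq0.
Qed.

End NonBridge.

Lemma coefE i : coef pt qt L i = (L i)^-1 * rho i.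
Proof.
case bridge: (is_bridge pt qt i); last by case: (nonbridge_terms (negbT bridge)).
by rewrite /coef bridge rho_bridge // mulVf ?gt_eqF.
Qed.

Lemma yterm1E i : yterm1 pt qt L i = (L i)^-1 * rho i ^+ 2.
Proof.
case bridge: (is_bridge pt qt i); last by case: (nonbridge_terms (negbT bridge)).
by rewrite /yterm1 bridge rho_bridge // expr2 mulrA mulVf ?mul1r ?gt_eqF.
Qed.

Lemma yterm2E i w : yterm2 pt qt L i w =
  (L i)^-1 * (psi i (pt i) + psi i (qt i) - 2 * psi i w) ^+ 2.
Proof.
case bridge: (is_bridge pt qt i); last by case: (nonbridge_terms (negbT bridge)).
by rewrite /yterm2 bridge psi_mid_bridge // expr2 mulrA mulVf ?mul1r ?gt_eqF.
Qed.

Section Contraction.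
Variable i : E.
Hypothesis pq_neq : pt i != qt i.

(* Rank-one update of [M]: the Green function of the contracted graph. *)
Definition green_contract (x y : V) : R := M x y - psi i x * psi i y / rho i.
Local Notation K := green_contract.

Lemma green_contract_pq y : K (pt i) y = K (qt i) y.
Proof.
have rho_neq0 := rho_neq0 pq_neq.
apply/eqP; rewrite -subr_eq0; apply/eqP.
have -> : K (pt i) y - K (qt i) y = psi i y - rho i * psi i y / rho i.
  by rewrite /K /rho /psi !(M_sym y); ring.
by field.
Qed.

Lemma green_contract_row x : \sum_y K x y = 0.
Proof. by rewrite /K sumrB M_row -mulr_suml -mulr_sumr sum_psi; ring. Qed.

Lemma green_contract_col y : \sum_x K x y = 0.
Proof. by rewrite /K sumrB M_col -!mulr_suml sum_psi; ring. Qed.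

Lemma contract_potential_kernel :
  potential_kernel (@con_pt _ _ pt qt i) (@con_qt _ _ pt qt i) (@del_L _ _ L i)
    (fun a b => K (val a) (val b)).
Proof.
move=> a b z; set c := (psi i (val b) - psi i (val z)) / rho i.
pose f u := K u (val b) - K u (val z).
have fpq : f (pt i) = f (qt i) by rewrite /f !green_contract_pq.
have lap_f x :
    lap (@del_pt _ _ pt i) (@del_qt _ _ qt i) (@del_L _ _ L i) f x =
    kron x (val b) - kron x (val z) - c * (kron x (pt i) - kron x (qt i)).
  have := lap_del_edge pt qt L i f x; rewrite fpq subrr mulr0 addr0 => <-.
  rewrite (@eq_lap _ _ _ _ _ _ _ (fun u => M u (val b) - M u (val z) - c * psi i u)).
    by rewrite lapBZ green_potential_kernel lap_psi.
  by move=> e; rewrite /f /K /c; field; apply: rho_neq0.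
move: (contract_neq_qt pq_neq a) (contract_neq_qt pq_neq b) (contract_neq_qt pq_neq z).
move=> /negbTE qa /negbTE qb /negbTE qz.
have qp : (qt i == pt i) = false by rewrite eq_sym (negbTE pq_neq).
rewrite (@lap_contract _ _ _ pt qt L i pq_neq _ fpq) !lap_f /kron eqxx qp.
by rewrite !(eq_sym (qt i)) qa qb qz -!val_eqE /=; ring.
Qed.

Lemma kirchhoff_index_contract :
  Kf_contract pt qt L i = (n - 1) * \sum_x K x x - n * K (qt i) (qt i).
Proof.
rewrite /Kf_contract (kirchhoff_indexE contract_potential_kernel) (card_contract pq_neq).
rewrite (sum_contract pq_neq (fun x => K x x)).
have -> : \sum_(a : cV pt qt i) \sum_(b : cV pt qt i) K (val a) (val b) = K (qt i) (qt i).
  under eq_bigr do rewrite (sum_contract pq_neq (K (val _))) green_contract_row add0r.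
  rewrite (sum_contract pq_neq (fun x => - K x (qt i))) sumrN green_contract_col.
  by rewrite opprK oppr0 add0r.
have V_gt0 : (0 < #|V|)%N by apply/card_gt0P; exists (pt i).
by rewrite -subn1 natrB //; ring.
Qed.

End Contraction.

Lemma coef_kirchhoff_index_contract i :
  coef pt qt L i * Kf_contract pt qt L i =
  (L i)^-1 * ((n - 1) * (rho i * \sum_x M x x - \sum_x psi i x ^+ 2)
              - n * (rho i * M (qt i) (qt i) - psi i (qt i) ^+ 2)).
Proof.
rewrite coefE; case: (eqVneq (pt i) (qt i)) => [pq_eq | pq_neq].
  have psi0 x : psi i x = 0 by rewrite /psi pq_eq subrr.
  have sum_sqr0 : \sum_x psi i x ^+ 2 = 0.
    by apply: big1 => x _; rewrite psi0 expr2 mulr0.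
  by rewrite /rho !psi0 sum_sqr0; ring.
rewrite kirchhoff_index_contract // /green_contract sumrB -mulr_suml.
under [X in X / rho i]eq_bigr do rewrite -expr2.
by field; rewrite rho_neq0 // gt_eqF.
Qed.

Lemma kirchhoff_contraction_identity w :
  (n - 4) * kirchhoff_index pt qt L =
    \sum_(i : E) coef pt qt L i * Kf_contract pt qt L i - n * ygamma pt qt L w.
Proof.
set tr := \sum_x M x x.
transitivity (\sum_i (((n - 1) * tr) * ((L i)^-1 * rho i)
   - (n - 1) * ((L i)^-1 * \sum_x psi i x ^+ 2)
   - n * ((L i)^-1 * (M (pt i) (pt i) * psi i (pt i) - M (qt i) (qt i) * psi i (qt i)))
   + (3 * n) * ((L i)^-1 * (psi i (pt i) + psi i (qt i)) * psi i w)
   - (3 * n) * ((L i)^-1 * psi i w ^+ 2))).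
  rewrite !(sumrB, big_split) /= -!mulr_sumr foster (sum_edges_psi_weighted (fun y => M y y)).
  rewrite sum_edges_psi_mid sum_edges_psi_sqr kirchhoff_index_green -/tr.
  under eq_bigr do rewrite mulr_sumr.
  rewrite exchange_big /=; under eq_bigr do rewrite sum_edges_psi_sqr; rewrite -/tr.
  by field.
have -> : \sum_i coef pt qt L i * Kf_contract pt qt L i - n * ygamma pt qt L w =
    \sum_i (coef pt qt L i * Kf_contract pt qt L i
             - (n * (4^-1 * yterm1 pt qt L i) + n * (3 / 4 * yterm2 pt qt L i w))).
  by rewrite /ygamma sumrB big_split /= -!mulr_sumr mulrDr.
apply: eq_bigr => i _.
rewrite coef_kirchhoff_index_contract yterm1E yterm2E /rho /psi (M_sym (qt i) (pt i)).
have four_neq0 : (4 : R) != 0 by rewrite pnatr_eq0.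
by rewrite /tr; field; rewrite gt_eqF.
Qed.

End GreenFunction.

Unset Implicit Arguments.
Set Strict Implicit.

Theorem theorem3p5 (R : realFieldType) (V E : finType)
    (pt qt : E -> V) (L : E -> R)
    (hL : forall e : E, 0 < L e)
    (hconn : connected_graph pt qt)
    (hv : (4 <= #|V|)%N)
    (w : V) :
  (#|V|%:R - 4) * kirchhoff_index pt qt L =
    \sum_(i : E) coef pt qt L i * Kf_contract pt qt L i
    - #|V|%:R * ygamma pt qt L w.
Proof.
have V_gt0 : (0 < #|V|)%N by apply: leq_trans hv.
have /card_gt0P [z _] := V_gt0.
have [M [M_sym M_row lap_M]] := green_exists hL hconn z.
have n_neq0 : (#|V|%:R : R) != 0 by rewrite pnatr_eq0 -lt0n.
exact: (kirchhoff_contraction_identity hL hconn n_neq0 M_sym M_row lap_M).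
Qed.
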